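(* Let $X$ be a Banach space with $\kappa_0(X)<\infty$. Then there exists $\epsilon>0$ such that every Banach space $Y$ with $d_K(X,Y)<\epsilon$ satisfies $\kappa_0(Y)<\infty$. (That is, the property $\kappa_0(X)<\infty$ is open for the Kadets distance.)
   Context: The Kadets distance $d_K(X,Y)$ is the infimum, over all Banach spaces $Z$ and linear isometric embeddings $U:X\to Z$, $V:Y\to Z$, of the Hausdorff distance in $Z$ between $UB_X$ and $VB_Y$ ($B_X$ the closed unit ball). For a Banach space $X$, $\kappa_0(X)$ is the least constant $\kappa_0$ (or $\infty$ if none exists) such that whenever $f:X\to\mathbb R$ is homogeneous, bounded on $B_X$, and satisfies $|f(x_1+x_2)-f(x_1)-f(x_2)|\le\|x_1\|_X+\|x_2\|_X$ for all $x_1,x_2\in X$, there is a continuous linear functional $x^*$ on $X$ with $|f(x)-x^*(x)|\le\kappa_0\|x\|_X$ for all $x\in X$. *)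

From HB Require Import structures.
From mathcomp Require Import all_boot all_order all_algebra.
From mathcomp Require Import all_classical all_reals all_analysis.
From mathcomp Require Import Rstruct Rstruct_topology.
Set Implicit Arguments. Unset Strict Implicit. Unset Printing Implicit Defensive.
Import Order.TTheory GRing.Theory Num.Theory.
Import numFieldNormedType.Exports.
Local Open Scope classical_set_scope.
Local Open Scope ring_scope.

Notation Rr := Rdefinitions.R.

Definition unit_ball (X : normedModType Rr) : set X := [set x | `|x| <= 1].

Definition lin_isometry (X Z : normedModType Rr) (U : X -> Z) : Prop :=
  (forall (a : Rr) (x y : X), U (a *: x + y) = a *: U x + U y) /\
  (forall x : X, `|U x| = `|x|).

Definition dist_set (Z : normedModType Rr) (z : Z) (A : set Z) : \bar Rr :=
  ereal_inf [set (`|z - a|)%:E | a in A].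

Definition hausdorff (Z : normedModType Rr) (A B : set Z) : \bar Rr :=
  maxe (ereal_sup [set dist_set a B | a in A])
       (ereal_sup [set dist_set b A | b in B]).

Definition kadets (X Y : completeNormedModType Rr) : \bar Rr :=
  ereal_inf [set e : \bar Rr | exists (Z : completeNormedModType Rr) (U : X -> Z) (V : Y -> Z),
     [/\ lin_isometry U, lin_isometry V &
         e = hausdorff (U @` @unit_ball X) (V @` @unit_ball Y)]].

Definition homogeneous (X : normedModType Rr) (f : X -> Rr) : Prop :=
  forall (a : Rr) (x : X), f (a *: x) = a * f x.

Definition bounded_on_ball (X : normedModType Rr) (f : X -> Rr) : Prop :=
  exists M : Rr, forall x : X, `|x| <= 1 -> `|f x| <= M.

Definition quasilinear1 (X : normedModType Rr) (f : X -> Rr) : Prop :=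
  forall x1 x2 : X, `|f (x1 + x2) - f x1 - f x2| <= `|x1| + `|x2|.

Definition cont_lin_functional (X : normedModType Rr) (g : X -> Rr) : Prop :=
  (forall (a : Rr) (x y : X), g (a *: x + y) = a * g x + g y) /\ continuous g.

Definition kappa0_admissible (X : normedModType Rr) (k : Rr) : Prop :=
  0 <= k /\
  forall f : X -> Rr, homogeneous f -> bounded_on_ball f -> quasilinear1 f ->
    exists g : X -> Rr, cont_lin_functional g /\
      forall x : X, `|f x - g x| <= k * `|x|.

(* kappa_0(X): least admissible constant, +oo if none *)
Definition kappa0 (X : normedModType Rr) : \bar Rr :=
  ereal_inf [set k%:E | k in kappa0_admissible X].

(* Let k be admissible for X, and let U : X -> Z, V : Y -> Z be isometric
   embeddings whose unit balls are e-close, with e (6 + 8 k) <= 1.  Choosing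
   homogeneously, for each x in X, a point phi x of Y with V (phi x) e|x|-close
   to U x gives a map phi : X -> Y which is additive up to 2 e (|x1| + |x2|).
   Hence a quasilinear f on Y bounded by M on the ball pulls back to a
   quasilinear function on X, which is approximated by a linear functional h.
   Hahn-Banach extends h o U^-1 from U X to Z, and composing with V yields a
   bounded linear g on Y with |f - g| <= 3 + 8 k + M / 2 on the ball.  Since
   f - g is again quasilinear, iterating drives the bound below 2 (3 + 8 k) + 1,
   which is therefore admissible for Y. *)

From HB Require Import structures.
From mathcomp Require Import all_boot all_order all_algebra.
From mathcomp Require Import all_classical all_reals all_analysis.
From mathcomp Require Import Rstruct Rstruct_topology.
From mathcomp Require Import ring lra.
Set Implicit Arguments. Unset Strict Implicit. Unset Printing Implicit Defensive.
Import Order.TTheory GRing.Theory Num.Theory.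
Import numFieldNormedType.Exports.
Local Open Scope classical_set_scope.
Local Open Scope ring_scope.

Section HahnBanach.
Variables (R : realType) (Z : lmodType R) (p : Z -> R).
Hypotheses (p_add : forall z1 z2, p (z1 + z2) <= p z1 + p z2)
           (p_scale : forall (a : R) z, p (a *: z) = `|a| * p z).

Let p0 : p 0 = 0.
Proof. by rewrite -(scale0r 0) p_scale normr0 mul0r. Qed.

Let pN z : p (- z) = p z.
Proof. by rewrite -scaleN1r p_scale normrN normr1 mul1r. Qed.

Definition dominated_graph (G : set (Z * R)) :=
  [/\ G (0, 0),
      forall z1 r1 z2 r2, G (z1, r1) -> G (z2, r2) -> G (z1 + z2, r1 + r2),
      forall a z r, G (z, r) -> G (a *: z, a * r) &
      forall z r, G (z, r) -> r <= p z].

Lemma dominated_graph_norm G z r : dominated_graph G -> G (z, r) -> `|r| <= p z.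
Proof.
case=> _ _ GZ Gp Gzr; rewrite ler_norml Gp // andbT lerNl -pN.
by have := Gp _ _ (GZ (-1) _ _ Gzr); rewrite scaleN1r mulN1r.
Qed.

Lemma dominated_graph_functional G z r1 r2 :
  dominated_graph G -> G (z, r1) -> G (z, r2) -> r1 = r2.
Proof.
move=> GG Gr1 Gr2; have [_ GD GZ _] := GG.
have := dominated_graph_norm GG (GD _ _ _ _ Gr1 (GZ (-1) _ _ Gr2)).
by rewrite scaleN1r mulN1r subrr p0 normr_le0 subr_eq0 => /eqP.
Qed.

Lemma dominated_graph_extendable G z0 : dominated_graph G ->
  exists c, forall z r, G (z, r) -> r - p (z - z0) <= c /\ c <= p (z + z0) - r.
Proof.
case=> G0 GD _ Gp.
have gap z1 r1 z2 r2 : G (z1, r1) -> G (z2, r2) ->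
    r1 - p (z1 - z0) <= p (z2 + z0) - r2.
  move=> G1 G2; have := Gp _ _ (GD _ _ _ _ G1 G2).
  have := p_add (z1 - z0) (z2 + z0); rewrite addrACA addNr addr0; lra.
pose S := [set t | exists z r, G (z, r) /\ t = r - p (z - z0)].
have S_ub : ubound S (p (0 + z0) - 0) by move=> _ [z [r [Gzr ->]]]; exact: gap.
have S_sup : has_sup S by split; [exists (0 - p (0 - z0)), 0, 0 | exists (p (0 + z0) - 0)].
exists (sup S) => z r Gzr; split.
- by apply: sup_upper_bound => //; exists z, r.
- by apply: ge_sup => [|_ [z' [r' [Gzr' ->]]]]; [case: S_sup | exact: gap].
Qed.

Lemma dominated_graph_adjoin G z0 c : dominated_graph G ->
  (forall z r, G (z, r) -> r - p (z - z0) <= c /\ c <= p (z + z0) - r) ->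
  dominated_graph [set zr | exists z r t, G (z, r) /\ zr = (z + t *: z0, r + t * c)].
Proof.
move=> [G0 GD GZ Gp] Gc; split.
- by exists 0, 0, 0; rewrite scale0r mul0r !addr0.
- move=> _ _ _ _ [z1 [r1 [t1 [G1 [-> ->]]]]] [z2 [r2 [t2 [G2 [-> ->]]]]].
  exists (z1 + z2), (r1 + r2), (t1 + t2); split; first exact: GD.
  by rewrite scalerDl mulrDl addrACA [r1 + _ + _]addrACA.
- move=> a _ _ [z [r [t [Gzr [-> ->]]]]].
  exists (a *: z), (a * r), (a * t); split; first exact: GZ.
  by rewrite scalerDr scalerA mulrDr mulrA.
- move=> _ _ [z [r [t [Gzr [-> ->]]]]].
  have [->|t0] := eqVneq t 0; first by rewrite scale0r mul0r !addr0; exact: Gp.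
  have Gt := GZ t^-1 _ _ Gzr.
  set w := t^-1 *: z + z0; set q := t^-1 * r + c.
  have -> : z + t *: z0 = t *: w by rewrite scalerDr scalerA divff // scale1r.
  have -> : r + t * c = t * q by rewrite mulrDr mulrA divff // mul1r.
  have q_le : q <= p w by have := (Gc _ _ Gt).2; rewrite /q /w; lra.
  have Nq_le : - q <= p w.
    have := (Gc _ _ (GZ (-1) _ _ Gt)).1.
    by rewrite scaleN1r mulN1r -[- _ - z0]opprD pN /q; lra.
  rewrite p_scale; apply: le_trans (ler_norm _) _; rewrite normrM.
  by apply: ler_wpM2l => //; rewrite ler_norml lerNl Nq_le q_le.
Qed.

Lemma dominated_graph_local W : W !=set0 ->
  (forall a b, W a -> W b ->
     exists2 G, dominated_graph G & [/\ G `<=` W, G a & G b]) ->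
  dominated_graph W.
Proof.
move=> [a Wa] loc; split.
- by have [G [G0 _ _ _] [GW _ _]] := loc _ _ Wa Wa; exact: GW.
- move=> z1 r1 z2 r2 W1 W2; have [G [_ GD _ _] [GW G1 G2]] := loc _ _ W1 W2.
  exact/GW/GD.
- by move=> t z r Wzr; have [G [_ _ GZ _] [GW Gzr _]] := loc _ _ Wzr Wzr; exact/GW/GZ.
- by move=> z r Wzr; have [G [_ _ _ Gp] [_ Gzr _]] := loc _ _ Wzr Wzr; exact: Gp.
Qed.

Lemma dominated_graph_chain B F : dominated_graph B ->
  (forall G, F G -> dominated_graph (G `|` B)) -> total_on F subset ->
  dominated_graph ((\bigcup_(G in F) G) `|` B).
Proof.
move=> GB FB Fchain; apply: dominated_graph_local.
  by exists (0, 0); right; case: GB.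
have FBsub H : F H -> H `|` B `<=` (\bigcup_(G in F) G) `|` B.
  by move=> FH; apply: setSU; exact: bigcup_sup.
move=> a b [[H1 FH1 H1a]|Ba] [[H2 FH2 H2b]|Bb].
- have [H12|H21] := Fchain _ _ FH1 FH2.
  + by exists (H2 `|` B); [exact: FB | split; [exact: FBsub | left; exact: H12 | left]].
  + by exists (H1 `|` B); [exact: FB | split; [exact: FBsub | left | left; exact: H21]].
- by exists (H1 `|` B); [exact: FB | split; [exact: FBsub | left | right]].
- by exists (H2 `|` B); [exact: FB | split; [exact: FBsub | right | left]].
- by exists B => //; split => // w Bw; right.
Qed.

Lemma dominated_graph_linear A : dominated_graph A -> (forall z, exists r, A (z, r)) ->
  exists Phi : {linear Z -> R^o}, forall z, A (z, Phi z).
Proof.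
move=> GA /choice [phi Aphi]; have [_ AD AZ _] := GA.
have phiL : linear phi.
  move=> a x y; apply: (dominated_graph_functional GA (Aphi _)).
  exact: AD (AZ a _ _ (Aphi x)) (Aphi y).
pose Phi : {linear Z -> R^o} := HB.pack phi (GRing.isLinear.Build _ _ _ _ phi phiL).
by exists Phi.
Qed.

Theorem hahn_banach (X : lmodType R) (U : {linear X -> Z}) (h : {linear X -> R^o}) :
  (forall x, h x <= p (U x)) ->
  exists Phi : {linear Z -> R^o}, (forall z, `|Phi z| <= p z) /\ forall x, Phi (U x) = h x.
Proof.
move=> hp; pose B := [set (U x, h x) | x in [set: X]].
have GB : dominated_graph B.
  split.
  - by exists 0 => //; rewrite !linear0.
  - move=> _ _ _ _ [x1 _ [<- <-]] [x2 _ [<- <-]].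
    by exists (x1 + x2) => //; rewrite !linearD.
  - by move=> a _ _ [x _ [<- <-]]; exists (a *: x) => //; rewrite !linearZ.
  - by move=> _ _ [x _ [<- <-]].
(* Taking the union with [B] keeps the empty chain admissible for Zorn's lemma. *)
pose P := [set G | dominated_graph (G `|` B)].
have [A [PA Amax]] : exists A, P A /\ forall G, A `<` G -> ~ P G.
  by apply: Zorn_bigcup => F FP Fchain; exact: dominated_graph_chain GB FP Fchain.
have BA : B `<=` A.
  have : ~ A `<` A `|` B by move=> /Amax; apply; rewrite /P /= -setUA setUid.
  move=> nAB zr Bzr; apply: contrapT => nA; apply: nAB.
  by split=> [|/(_ zr (or_intror Bzr))//]; exact: subsetUl.
have GA : dominated_graph A by move: PA; rewrite /P /= (setUidl BA).
have Atotal z0 : exists r, A (z0, r).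
  have [c Ac] := dominated_graph_extendable z0 GA.
  have GA' := dominated_graph_adjoin GA Ac; set A' := [set _ | _] in GA'.
  have AA' : A `<=` A'.
    by move=> [z r] Azr; exists z, r, 0; rewrite scale0r mul0r !addr0.
  apply: contrapT => nA; apply: (Amax A').
    split=> // /(_ (z0, c)) A'A; apply: nA; exists c; apply: A'A.
    by exists 0, 0, 1; split; [case: GA | rewrite scale1r mul1r !add0r].
  by rewrite /P /= (setUidl (subset_trans BA AA')).
have [Phi APhi] := dominated_graph_linear GA Atotal.
exists Phi; split=> [z|x]; first exact: dominated_graph_norm GA (APhi z).
by apply: dominated_graph_functional GA (APhi _) (BA _ _); exists x.
Qed.

End HahnBanach.

Lemma homogeneous_choice (R : fieldType) (X Y : lmodType R) (P : X -> Y -> Prop) :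
  (forall x, exists y, P x y) -> (forall a x y, P x y -> P (a *: x) (a *: y)) ->
  exists phi : X -> Y, (forall x, P x (phi x)) /\ forall a x, phi (a *: x) = a *: phi x.
Proof.
move=> /choice [psi Ppsi] PZ.
pose line (x : X) : set X := [set a *: x | a in [set a : R | a != 0]].
have line_scale a x : a != 0 -> line (a *: x) = line x.
  move=> a0; apply/seteqP; split=> _ [b b0 <-].
  - by exists (b * a); [rewrite /= mulf_neq0 | rewrite scalerA].
  - by exists (b / a); [rewrite /= mulf_neq0 ?invr_eq0 | rewrite scalerA divfK].
(* [rep] picks one point on each line through 0, so that [phi] only has to be
   chosen there and can be transported along the line by scaling. *)
pose rep x := xget 0 (line x).
have /choice [beta rep_beta] x : exists b, b != 0 /\ rep x = b *: x.
  have [b b0 <-] : line x (rep x) by apply: xgetPex; exists x, 1; rewrite ?scale1r /= ?oner_neq0.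
  by exists b.
pose phi x := if x == 0 then 0 else (beta x)^-1 *: psi (rep x).
exists phi; split=> [x|a x]; rewrite /phi.
  have [->|_] := eqVneq x 0; first by have := PZ 0 _ _ (Ppsi 0); rewrite !scale0r.
  have [b0 rep_x] := rep_beta x; have := PZ (beta x)^-1 _ _ (Ppsi (rep x)).
  by rewrite {1}rep_x scalerA mulVf // scale1r.
have [->|a0] := eqVneq a 0; first by rewrite !scale0r eqxx.
have [->|x0] := eqVneq x 0; first by rewrite scaler0 eqxx scaler0.
rewrite scaler_eq0 (negbTE a0) (negbTE x0) scalerA /rep line_scale //.
have [ba0 rep_ax] := rep_beta (a *: x); have [b0 rep_x] := rep_beta x.
have : (beta x - beta (a *: x) * a) *: x = 0.
  by rewrite scalerBl -scalerA -rep_ax -rep_x /rep line_scale // subrr.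
move=> /eqP; rewrite scaler_eq0 (negbTE x0) orbF subr_eq0 => /eqP ->.
by congr (_ *: _); field; rewrite ba0 a0.
Qed.

Section NormalizedVectors.
Variable W : normedModType Rr.

Lemma normalize_ball (x : W) : `| `|x|^-1 *: x | <= 1.
Proof.
have [->|x0] := eqVneq x 0; first by rewrite scaler0 normr0.
by rewrite normrZ normfV normr_id mulVf ?normr_eq0.
Qed.

Lemma normalizeK (x : W) : `|x| *: (`|x|^-1 *: x) = x.
Proof.
have [->|x0] := eqVneq x 0; first by rewrite !scaler0.
by rewrite scalerKV ?normr_eq0.
Qed.

End NormalizedVectors.

Section Quasilinear.
Variable Y : normedModType Rr.
Implicit Types (f : Y -> Rr) (g : {linear Y -> Rr^o}).

Lemma homogeneous_le f M : homogeneous f ->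
  (forall y, `|y| <= 1 -> `|f y| <= M) -> forall y, `|f y| <= M * `|y|.
Proof.
move=> hf fM y; rewrite -{1}(normalizeK y) hf normrM normr_id mulrC.
exact: ler_wpM2r (fM _ (normalize_ball y)).
Qed.

Lemma homogeneousB f g : homogeneous f -> homogeneous (f \- g).
Proof. by move=> hf a y; rewrite /= hf linearZ /= mulrBr. Qed.

Lemma quasilinear1B f g : quasilinear1 f -> quasilinear1 (f \- g).
Proof.
move=> qf y1 y2; rewrite /= linearD.
by rewrite [X in `|X|](_ : _ = f (y1 + y2) - f y1 - f y2); [exact: qf | ring].
Qed.

Lemma quasilinear1_shift f M y d : quasilinear1 f -> `|f d| <= M * `|d| ->
  `|f (y + d) - f y| <= `|y| + (1 + M) * `|d|.
Proof.
move=> qf fd; have := ler_normD (f (y + d) - f y - f d) (f d).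
by rewrite subrK; have := qf y d; lra.
Qed.

End Quasilinear.

Lemma ler_normD3 (R : numDomainType) (a b c : R) : `|a + b + c| <= `|a| + `|b| + `|c|.
Proof. by apply: le_trans (ler_normD _ _) _; rewrite lerD2r ler_normD. Qed.

Lemma hausdorffC (Z : normedModType Rr) (A B : set Z) : hausdorff A B = hausdorff B A.
Proof. by rewrite /hausdorff maxC. Qed.

Lemma hausdorff_lt (Z : normedModType Rr) (A B : set Z) (e : Rr) a :
  (hausdorff A B < e%:E)%E -> A a -> exists2 b, B b & `|a - b| < e.
Proof.
move=> ABe Aa; have : (dist_set a B < e%:E)%E.
  apply: le_lt_trans ABe; rewrite le_max; apply/orP; left.
  by apply: ereal_sup_ubound; exists a.
by move=> /ereal_inf_lt [_ [b Bb <-]]; rewrite lte_fin; exists b.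
Qed.

Definition ball_approx (X Y Z : normedModType Rr) (U : X -> Z) (V : Y -> Z) (e : Rr) :=
  forall x, `|x| <= 1 -> exists2 y, `|y| <= 1 & `|U x - V y| < e.

Lemma kadets_lt (X Y : completeNormedModType Rr) (e : Rr) : (kadets X Y < e%:E)%E ->
  exists (Z : completeNormedModType Rr) (U : {linear X -> Z}) (V : {linear Y -> Z}),
    [/\ forall x, `|U x| = `|x|, forall y, `|V y| = `|y|,
        ball_approx U V e & ball_approx V U e].
Proof.
move=> /ereal_inf_lt [_ [Z [U [V [iU iV ->]]]] UVe].
pose U' : {linear X -> Z} := HB.pack U (GRing.isLinear.Build _ _ _ _ U iU.1).
pose V' : {linear Y -> Z} := HB.pack V (GRing.isLinear.Build _ _ _ _ V iV.1).
exists Z, U', V'; split; [exact: iU.2 | exact: iV.2 | |].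
- move=> x x1; have [_ [y y1 <-]] := hausdorff_lt UVe (ex_intro2 _ _ x x1 erefl).
  by exists y.
- rewrite hausdorffC in UVe.
  move=> y y1; have [_ [x x1 <-]] := hausdorff_lt UVe (ex_intro2 _ _ y y1 erefl).
  by exists x.
Qed.

Lemma kappa0_lt_pinftyP (X : normedModType Rr) :
  (kappa0 X < +oo)%E <-> exists k, kappa0_admissible X k.
Proof.
split=> [/ereal_inf_lt [_ [k kX <-] _]|[k kX]]; first by exists k.
by apply: le_lt_trans (ltry k); apply: ereal_inf_lbound; exists k.
Qed.

Lemma bounded_linear_cont_lin_functional (Y : normedModType Rr)
    (g : {linear Y -> Rr^o}) C :
  (forall y, `|g y| <= C * `|y|) -> cont_lin_functional g.
Proof.
move=> gC; split; first exact: linearP.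
apply: (@bounded_linear_continuous _ Y Rr^o g); apply/linear_boundedP.
near=> r => y; apply: le_trans (gC y) (ler_wpM2r (normr_ge0 _) _).
by near: r; apply: nbhs_pinfty_ge; rewrite num_real.
Unshelve. all: by end_near.
Qed.

Section KadetsPerturbation.
Variables (X Y W : normedModType Rr) (U : {linear X -> W}) (V : {linear Y -> W}).
Variables (e k : Rr).
Hypotheses (normU : forall x, `|U x| = `|x|) (normV : forall y, `|V y| = `|y|).
Hypotheses (e_ge0 : 0 <= e) (e_small : e * (6 + 8 * k) <= 1).
Hypothesis kX : kappa0_admissible X k.
Hypotheses (UV : ball_approx U V e) (VU : ball_approx V U e).

(* [lra] ignores [Let]-bound facts, so [k_ge0] and [e_le1] are passed to it
   explicitly. *)
Let k_ge0 : 0 <= k. Proof. by case: kX. Qed.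
Let e_le1 : e <= 1. Proof. by move: e_small; have := mulr_ge0 e_ge0 k_ge0; lra. Qed.

Lemma exists_homogeneous_approx_map : exists phi : X -> Y,
  [/\ forall (a : Rr) x, phi (a *: x) = a *: phi x,
      forall x, `|phi x| <= `|x| &
      forall x, `|U x - V (phi x)| <= e * `|x|].
Proof.
pose P x y := `|y| <= `|x| /\ `|U x - V y| <= e * `|x|.
have [phi [Pphi phiZ]] : exists phi : X -> Y,
    (forall x, P x (phi x)) /\ forall (a : Rr) x, phi (a *: x) = a *: phi x.
  apply: (@homogeneous_choice _ X Y P) => [x|a x y [yx Uxy]].
    have [y y1 /ltW Uy] := UV (normalize_ball x).
    exists (`|x| *: y); rewrite /P normrZ normr_id; split.
      exact: ler_piMr (normr_ge0 _) y1.
    rewrite -{1}(normalizeK x) (linearZ_LR U) (linearZ_LR V) -scalerBr.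
    rewrite normrZ normr_id mulrC.
    exact: (ler_wpM2r (normr_ge0 x) Uy).
  rewrite /P (linearZ_LR U) (linearZ_LR V) -scalerBr !normrZ mulrCA.
  by split; apply: ler_wpM2l.
by exists phi; split=> // x; have [] := Pphi x.
Qed.

Section Pullback.
Variable phi : X -> Y.
Hypotheses (phiZ : forall (a : Rr) x, phi (a *: x) = a *: phi x)
           (phi_le : forall x, `|phi x| <= `|x|)
           (phi_approx : forall x, `|U x - V (phi x)| <= e * `|x|).

Lemma approx_map_almost_additive x1 x2 :
  `|phi (x1 + x2) - (phi x1 + phi x2)| <= 2 * e * (`|x1| + `|x2|).
Proof.
rewrite -normV (linearB V) (linearD V).
apply: le_trans (ler_distD (U (x1 + x2)) _ _) _.
rewrite [X in X + _]distrC [in U (x1 + x2) - (_ + _)](linearD U) opprD addrACA.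
have := ler_normD (U x1 - V (phi x1)) (U x2 - V (phi x2)).
have := ler_wpM2l e_ge0 (ler_normD x1 x2).
have := phi_approx (x1 + x2); have := phi_approx x1; have := phi_approx x2.
lra.
Qed.

Lemma quasilinear1_pullback (f : Y -> Rr) M : quasilinear1 f -> 0 <= M ->
  (forall y, `|f y| <= M * `|y|) -> forall x1 x2,
  `|f (phi (x1 + x2)) - f (phi x1) - f (phi x2)| <= (4 + 2 * e * M) * (`|x1| + `|x2|).
Proof.
move=> qf M_ge0 fM x1 x2; set y1 := phi x1; set y2 := phi x2.
set d := phi (x1 + x2) - (y1 + y2).
have -> : phi (x1 + x2) = y1 + y2 + d by rewrite [RHS]addrC subrK.
have := ler_normD (f (y1 + y2 + d) - f (y1 + y2)) (f (y1 + y2) - f y1 - f y2).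
rewrite [X in `|X| <= _ -> _](_ : _ = f (y1 + y2 + d) - f y1 - f y2); last by ring.
have := quasilinear1_shift (y1 + y2) qf (fM d); have := qf y1 y2.
have := ler_normD y1 y2; have := phi_le x1; have := phi_le x2.
have := ler_wpM2l (addr_ge0 ler01 M_ge0) (approx_map_almost_additive x1 x2).
have := ler_wpM2r (normr_ge0 x1) e_le1; have := ler_wpM2r (normr_ge0 x2) e_le1.
rewrite !mul1r; lra.
Qed.

Lemma pullback_linear_approx (f : Y -> Rr) M :
  homogeneous f -> quasilinear1 f -> 0 <= M -> (forall y, `|f y| <= M * `|y|) ->
  exists h : {linear X -> Rr^o},
    forall x, `|f (phi x) - h x| <= (4 + 2 * e * M) * k * `|x|.
Proof.
move=> hf qf M_ge0 fM; set L := 4 + 2 * e * M.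
have L_gt0 : 0 < L by move: (mulr_ge0 e_ge0 M_ge0); rewrite /L; lra.
pose F x := f (phi x) / L.
have [_ /(_ F) [||| g [[gL _] Fg]]] := kX.
- by move=> a x; rewrite /F phiZ hf mulrA.
- exists (M / L) => x x1; rewrite /F normrM normfV (gtr0_norm L_gt0).
  rewrite ler_pM2r ?invr_gt0 //.
  apply: le_trans (fM _) _; apply: ler_piMr => //; exact: le_trans (phi_le x) x1.
- move=> x1 x2; rewrite /F -!mulrBl normrM normfV (gtr0_norm L_gt0).
  by rewrite ler_pdivrMr // mulrC; exact: quasilinear1_pullback.
pose h (x : X) : Rr^o := L * g x.
have hL : linear h by move=> a u v; rewrite /h gL mulrDr mulrCA.
pose H : {linear X -> Rr^o} := HB.pack h (GRing.isLinear.Build _ _ _ _ h hL).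
exists H => x; rewrite /= /h.
have -> : f (phi x) - L * g x = L * (F x - g x).
  by rewrite /F; field; rewrite gt_eqF.
rewrite normrM (gtr0_norm L_gt0) -mulrA; apply: ler_wpM2l => //; exact: ltW.
Qed.

End Pullback.

Lemma quasilinear_approx_step (f : Y -> Rr) M :
  homogeneous f -> quasilinear1 f -> 0 <= M -> (forall y, `|y| <= 1 -> `|f y| <= M) ->
  exists g : {linear Y -> Rr^o}, (exists C, forall y, `|g y| <= C * `|y|) /\
    forall y, `|y| <= 1 -> `|f y - g y| <= 3 + 8 * k + M / 2.
Proof.
move=> hf qf M_ge0 fM1; have fM := homogeneous_le hf fM1.
have [phi [phiZ phi_le phi_approx]] := exists_homogeneous_approx_map.
have [h fh] := pullback_linear_approx phiZ phi_le phi_approx hf qf M_ge0 fM.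
set L := 4 + 2 * e * M in fh; set C := M + L * k.
have L_ge0 : 0 <= L by move: (mulr_ge0 e_ge0 M_ge0); rewrite /L; lra.
have C_ge0 : 0 <= C by rewrite addr_ge0 ?mulr_ge0.
have h_le x : h x <= C * `|U x|.
  rewrite normU; apply: le_trans (ler_norm _) _.
  have := ler_normD (h x - f (phi x)) (f (phi x)); rewrite subrK distrC.
  have := fh x; have := ler_wpM2l M_ge0 (phi_le x); have := fM (phi x).
  by rewrite /C; lra.
have p_add (z1 z2 : W) : C * `|z1 + z2| <= C * `|z1| + C * `|z2|.
  by rewrite -mulrDr; apply: ler_wpM2l => //; exact: ler_normD.
have p_scale (a : Rr) (z : W) : C * `|a *: z| = `|a| * (C * `|z|).
  by rewrite normrZ mulrCA.
have [Phi [Phi_le PhiU]] := hahn_banach p_add p_scale h_le.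
exists (Phi \o V); split; first by exists C => y; rewrite /= -normV.
move=> y y1; have [x x1 /ltW Vyx] := VU y1.
set y' := phi x; set d := y - y'.
have y'1 : `|y'| <= 1 by exact: le_trans (phi_le x) x1.
have d_le : `|d| <= 2 * e.
  rewrite -normV (linearB V); apply: le_trans (ler_distD (U x) _ _) _.
  by have := ler_wpM2l e_ge0 x1; have := phi_approx x; lra.
have -> : f y - (Phi \o V) y = (f (y' + d) - f y') + (f y' - h x) + Phi (U x - V y).
  by rewrite (linearB Phi) PhiU /= /d [y' + _]addrC subrK; ring.
(* The error is at most 1 + 2 e (1 + M) + L k + C e, and e (6 + 8 k) <= 1
   brings this under 3 + 8 k + M / 2. *)
apply: le_trans (ler_normD3 _ _ _) _.
have := quasilinear1_shift y' qf (fM d); have := fh x; have := Phi_le (U x - V y).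
rewrite distrC.
have := ler_wpM2l (addr_ge0 ler01 M_ge0) d_le.
have := ler_wpM2l (mulr_ge0 L_ge0 k_ge0) x1; have := ler_wpM2l C_ge0 Vyx.
have := ler_wpM2r k_ge0 e_le1; have := ler_wpM2l M_ge0 e_small.
have := ler_wpM2r (mulr_ge0 (mulr_ge0 e_ge0 M_ge0) k_ge0) e_le1.
move: e_le1 k_ge0; rewrite /C /L; lra.
Qed.

Lemma quasilinear_approx (f : Y -> Rr) M : homogeneous f -> quasilinear1 f ->
  (forall y, `|y| <= 1 -> `|f y| <= M) ->
  exists g : {linear Y -> Rr^o}, (exists C, forall y, `|g y| <= C * `|y|) /\
    forall y, `|f y - g y| <= (2 * (3 + 8 * k) + 1) * `|y|.
Proof.
move=> hf qf fM; have M_ge0 : 0 <= M by apply: le_trans (fM 0 _); rewrite ?normr0.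
have [n M_le] : exists n : nat, M <= 2 * (3 + 8 * k) + 1 + n%:R.
  exists (Num.Def.trunc M).+1; have := truncnS_gt M; move: k_ge0; lra.
elim: n f M hf qf fM M_ge0 M_le => [|n IHn] f M hf qf fM M_ge0 M_le.
  exists (\0 : {linear Y -> Rr^o}); split; first by exists 0 => y; rewrite normr0 mul0r.
  move=> y; rewrite subr0; apply: le_trans (homogeneous_le hf fM y) _.
  by apply: ler_wpM2r => //; rewrite addr0 in M_le.
have [g1 [[C1 g1C] fg1]] := quasilinear_approx_step hf qf M_ge0 fM.
have [|||||g2 [[C2 g2C] fg2]] := IHn (f \- g1) (3 + 8 * k + M / 2).
- exact: homogeneousB.
- exact: quasilinear1B.
- exact: fg1.
- by move: k_ge0; lra.
- by move: M_le k_ge0 (ler0n Rr n); rewrite -[n.+1%:R]natr1; lra.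
exists (g1 \+ g2); split.
  exists (C1 + C2) => y; rewrite /= mulrDl.
  by apply: le_trans (ler_normD _ _) (lerD (g1C y) (g2C y)).
by move=> y; rewrite /= opprD addrA; exact: fg2.
Qed.

Lemma kappa0_admissible_perturb : kappa0_admissible Y (2 * (3 + 8 * k) + 1).
Proof.
split=> [|f hf [M fM] qf]; first by move: k_ge0; lra.
have [g [[C gC] fg]] := quasilinear_approx hf qf fM.
by exists g; split=> //; exact: bounded_linear_cont_lin_functional gC.
Qed.

End KadetsPerturbation.

Theorem theorem5p3 (X : completeNormedModType Rr) :
  (kappa0 X < +oo)%E ->
  exists eps : Rr, 0 < eps /\
    forall Y : completeNormedModType Rr,
      (kadets X Y < eps%:E)%E -> (kappa0 Y < +oo)%E.
Proof.
move=> /kappa0_lt_pinftyP [k kX]; have k_ge0 : 0 <= k by case: kX.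
have c_gt0 : 0 < 6 + 8 * k by lra.
exists (6 + 8 * k)^-1; split=> [|Y]; first by rewrite invr_gt0.
move=> /kadets_lt [Z [U [V [normU normV UV VU]]]].
apply/kappa0_lt_pinftyP; exists (2 * (3 + 8 * k) + 1).
apply: (kappa0_admissible_perturb normU normV _ _ kX UV VU).
- by rewrite invr_ge0 ltW.
- by rewrite mulVf // gt_eqF.
Qed.
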